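(* In any execution of $\mathcal{U}$, suppose a process $p$ reads $(t(o), o, h(o))$ from $A$ at line 8 at time $T$ and $o$ is done at time $T$. If $p$ subsequently executes line 10 (in the same iteration), then the condition tested at line 10 is false.
   Context: Model: an asynchronous shared-memory system with possibly infinitely many processes, any of which may crash, communicating via atomic shared objects. A fetch-and-increment (F\&I) object stores an integer; F\&I$(C)$ atomically returns the current value and increments it. A generalized-compare-and-swap (GCAS) object $O$ stores a value and supports Read$(O)$ and GCAS$(c, O, v_1, v_2)$, which atomically does: if $c(\text{current value of } O, v_1)$ holds then set $O := v_2$ and return true, else return false. Tuples are compared componentwise for $=$; GCAS$(>, A, (t,-,-), v)$ succeeds iff the time field of $A$ is strictly greater than $t$. Implemented type $\mathcal{T} = (OP, RES, Q, \delta)$ with initial state $s_0$; a procedure $apply_{\mathcal{T}}(o,s)$ returns some $(s',r)$ with $(s,o,s',r)\in\delta$. $NULL$ is a value different from every response of $\mathcal{T}$, and $NOOP$ is a name different from every operation of $\mathcal{T}$. Algorithm $\mathcal{U}$: each process $p$ owns a GCAS object $H_p$ with fields $(time, response)$. Shared objects: F\&I object $C$, initially $1$; GCAS object $A$ with fields $(time, op, ptr)$, initially $(0, NOOP, h(NOOP))$, where $h(NOOP)$ is a pointer to an immutable location containing $(0,\perp)$; GCAS object $S$ with fields $(time, state, response, ptr)$, initially $(0, s_0, \perp, h(NOOP))$. Process $p$ performs operation $o$ by calling DoOp$(o)$: (1) DoOp$(o)$ invoked; (2) $t := $ F\&I$(C)$; (3) $H_p := (t, NULL)$; (4) while $H_p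 = (t, NULL)$ do: (5) $(t^*, s^*, r^*, roptr^* ) := S$; (6) GCAS$(=, *roptr^*, (t^*, NULL), (t^*, r^* ))$; (7) GCAS$(>, A, (t,-,-), (t, o, \&H_p))$; (8) $(t', o', roptr') := A$; (9) $(\hat t, \hat r) := *roptr'$; (10) if $(\hat t,\hat r) = (t', NULL)$ then (11) $(s', r') := apply_{\mathcal{T}}(o', s^* )$; (12) GCAS$(=, S, (t^*,s^*,r^*,roptr^* ), (t', s', r', roptr'))$; (13) else GCAS$(=, A, (t', o', roptr'), (t, o, \&H_p))$; end while; (14) return $H_p.response$. Notation: an ''operation'' $o$ means one invocation of DoOp$(o)$ (or the initial $NOOP$). $p(o)$ is the process executing it; $t(o)$ is the value returned by its F\&I at line 2, or $\infty$ if line 2 has not been executed; $h(o)$ is $H_{p(o)}$. For $NOOP$: $t(NOOP)=0$ and $h(NOOP)$ is the immutable location containing $(0,\perp)$. Operation $o$ is done at time $T$ if at some time $T'\le T$, $h(o) = (t(o), r)$ with $r \neq NULL$. *)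

From Stdlib Require Import Arith PeanoNat.
Set Implicit Arguments.

Section AlgU.
Variables (OP RES Q : Type).

(* response-field values: NULL, the initial "bottom", or a response of T *)
Inductive rv := RNull | RBot | RVal (r : RES).
Inductive opn := NOOP | Op (o : OP).
(* pointers: h(NOOP) (immutable location) or &H_q for process q *)
Inductive ptr := PNoop | PH (q : nat).

(* program counters of a process, carrying its local variables.
   AtK = next line to execute is K; fields: o t t* s* r* roptr* t' o' roptr' ... *)
Inductive pcs :=
| Idle
| At2 (o : OP)
| At3 (o : OP) (t : nat)
| At4 (o : OP) (t : nat)
| At5 (o : OP) (t : nat)
| At6 (o : OP) (t ts : nat) (ss : Q) (rs : rv) (ps : ptr)
| At7 (o : OP) (t ts : nat) (ss : Q) (rs : rv) (ps : ptr)
| At8 (o : OP) (t ts : nat) (ss : Q) (rs : rv) (ps : ptr)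
| At9 (o : OP) (t ts : nat) (ss : Q) (rs : rv) (ps : ptr) (t1 : nat) (o1 : opn) (p1 : ptr)
| At10 (o : OP) (t ts : nat) (ss : Q) (rs : rv) (ps : ptr) (t1 : nat) (o1 : opn) (p1 : ptr)
       (th : nat) (rh : rv)
| At11 (o : OP) (t ts : nat) (ss : Q) (rs : rv) (ps : ptr) (t1 : nat) (o1 : opn) (p1 : ptr)
| At12 (o : OP) (t ts : nat) (ss : Q) (rs : rv) (ps : ptr) (t1 : nat) (o1 : opn) (p1 : ptr)
       (sn : Q) (rn : RES)
| At13 (o : OP) (t ts : nat) (ss : Q) (rs : rv) (ps : ptr) (t1 : nat) (o1 : opn) (p1 : ptr)
| At14 (o : OP) (t : nat).

(* line labels of atomic steps; line 10 is split by the outcome of its test *)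
Inductive line := L1 | L2 | L3 | L4 | L5 | L6 | L7 | L8 | L9 | L10T | L10F
  | L11 | L12 | L13 | L14.

Record config := mkConfig {
  cC : nat;
  cA : nat * opn * ptr;
  cS : nat * Q * rv * ptr;
  cH : nat -> nat * rv;
  cpc : nat -> pcs }.

Definition derefH (H : nat -> nat * rv) (x : ptr) : nat * rv :=
  match x with PNoop => (0, RBot) | PH q => H q end.
Definition updH (H : nat -> nat * rv) (q : nat) (v : nat * rv) :=
  fun r => if Nat.eqb r q then v else H r.
(* writing through h(NOOP) has no effect: that location is immutable *)
Definition writeP (H : nat -> nat * rv) (x : ptr) (v : nat * rv) :=
  match x with PNoop => H | PH q => updH H q v end.

Definition set_pc (c : config) (p : nat) (s : pcs) : config :=
  mkConfig (cC c) (cA c) (cS c) (cH c) (fun q => if Nat.eqb q p then s else cpc c q).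
Definition set_C (c : config) n := mkConfig n (cA c) (cS c) (cH c) (cpc c).
Definition set_A (c : config) a := mkConfig (cC c) a (cS c) (cH c) (cpc c).
Definition set_S (c : config) s := mkConfig (cC c) (cA c) s (cH c) (cpc c).
Definition set_H (c : config) h := mkConfig (cC c) (cA c) (cS c) h (cpc c).

Variable apply : OP -> Q -> Q * RES.
Variable s0 : Q.

Definition init : config :=
  mkConfig 1 (0, NOOP, PNoop) (0, s0, RBot, PNoop) (fun _ => (0, RBot)) (fun _ => Idle).

Inductive step (p : nat) : line -> config -> config -> Prop :=
| st1 c o : cpc c p = Idle -> step p L1 c (set_pc c p (At2 o))
| st2 c o : cpc c p = At2 o ->
    step p L2 c (set_pc (set_C c (S (cC c))) p (At3 o (cC c)))
| st3 c o t : cpc c p = At3 o t ->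
    step p L3 c (set_pc (set_H c (updH (cH c) p (t, RNull))) p (At4 o t))
| st4_in c o t : cpc c p = At4 o t -> cH c p = (t, RNull) ->
    step p L4 c (set_pc c p (At5 o t))
| st4_out c o t : cpc c p = At4 o t -> cH c p <> (t, RNull) ->
    step p L4 c (set_pc c p (At14 o t))
| st5 c o t ts ss rs ps : cpc c p = At5 o t -> cS c = (ts, ss, rs, ps) ->
    step p L5 c (set_pc c p (At6 o t ts ss rs ps))
| st6 c o t ts ss rs ps H' : cpc c p = At6 o t ts ss rs ps ->
    ((derefH (cH c) ps = (ts, RNull) /\ H' = writeP (cH c) ps (ts, rs)) \/
     (derefH (cH c) ps <> (ts, RNull) /\ H' = cH c)) ->
    step p L6 c (set_pc (set_H c H') p (At7 o t ts ss rs ps))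
| st7 c o t ts ss rs ps A' : cpc c p = At7 o t ts ss rs ps ->
    ((t < fst (fst (cA c)) /\ A' = (t, Op o, PH p)) \/
     (fst (fst (cA c)) <= t /\ A' = cA c)) ->
    step p L7 c (set_pc (set_A c A') p (At8 o t ts ss rs ps))
| st8 c o t ts ss rs ps t1 o1 p1 : cpc c p = At8 o t ts ss rs ps ->
    cA c = (t1, o1, p1) ->
    step p L8 c (set_pc c p (At9 o t ts ss rs ps t1 o1 p1))
| st9 c o t ts ss rs ps t1 o1 p1 th rh : cpc c p = At9 o t ts ss rs ps t1 o1 p1 ->
    derefH (cH c) p1 = (th, rh) ->
    step p L9 c (set_pc c p (At10 o t ts ss rs ps t1 o1 p1 th rh))
| st10T c o t ts ss rs ps t1 o1 p1 th rh :
    cpc c p = At10 o t ts ss rs ps t1 o1 p1 th rh -> (th, rh) = (t1, RNull) ->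
    step p L10T c (set_pc c p (At11 o t ts ss rs ps t1 o1 p1))
| st10F c o t ts ss rs ps t1 o1 p1 th rh :
    cpc c p = At10 o t ts ss rs ps t1 o1 p1 th rh -> (th, rh) <> (t1, RNull) ->
    step p L10F c (set_pc c p (At13 o t ts ss rs ps t1 o1 p1))
| st11 c o t ts ss rs ps t1 x p1 :
    cpc c p = At11 o t ts ss rs ps t1 (Op x) p1 ->
    step p L11 c (set_pc c p (At12 o t ts ss rs ps t1 (Op x) p1
                               (fst (apply x ss)) (snd (apply x ss))))
| st12 c o t ts ss rs ps t1 o1 p1 sn rn S' :
    cpc c p = At12 o t ts ss rs ps t1 o1 p1 sn rn ->
    ((cS c = (ts, ss, rs, ps) /\ S' = (t1, sn, RVal rn, p1)) \/
     (cS c <> (ts, ss, rs, ps) /\ S' = cS c)) ->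
    step p L12 c (set_pc (set_S c S') p (At4 o t))
| st13 c o t ts ss rs ps t1 o1 p1 A' :
    cpc c p = At13 o t ts ss rs ps t1 o1 p1 ->
    ((cA c = (t1, o1, p1) /\ A' = (t, Op o, PH p)) \/
     (cA c <> (t1, o1, p1) /\ A' = cA c)) ->
    step p L13 c (set_pc (set_A c A') p (At4 o t))
| st14 c o t : cpc c p = At14 o t -> step p L14 c (set_pc c p Idle).

(* An execution: c i is the configuration at time i; sch i is the atomic step
   taken at time i (None = nothing happens, allowing finite executions). *)
Definition execution (c : nat -> config) (sch : nat -> option (nat * line)) : Prop :=
  c 0 = init /\
  forall i, match sch i with
            | None => c (S i) = c i
            | Some (p, l) => step p l (c i) (c (S i))
            end.

(* operations: the initial NOOP, or the invocation of DoOp(x) by process q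
   whose F&I at line 2 returned t *)
Inductive operation := NoopOp | RealOp (q : nat) (t : nat) (x : OP).

Definition is_operation (c : nat -> config) (sch : nat -> option (nat * line))
  (o : operation) : Prop :=
  match o with
  | NoopOp => True
  | RealOp q t x => exists i, sch i = Some (q, L2) /\ cpc (c i) q = At2 x /\ cC (c i) = t
  end.

Definition top (o : operation) : nat := match o with NoopOp => 0 | RealOp _ t _ => t end.
Definition Aval (o : operation) : nat * opn * ptr :=
  match o with NoopOp => (0, NOOP, PNoop) | RealOp q t x => (t, Op x, PH q) end.
Definition hval (cf : config) (o : operation) : nat * rv :=
  match o with NoopOp => (0, RBot) | RealOp q _ _ => cH cf q end.

Definition done (c : nat -> config) (o : operation) (T : nat) : Prop :=
  exists T' r, T' <= T /\ hval (c T') o = (top o, r) /\ r <> RNull.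

End AlgU.

(* Once h(o) holds (t(o), r) with r <> NULL, it never holds (t(o), NULL) again:
   the time field of a register H_q never decreases, line 6 only overwrites a
   cell of the form (t, NULL) and keeps its time, and line 3 writes
   (t, NULL) with a fresh ticket t strictly above the current time of H_q
   (every time stored in some H_q is below C).  So the value of h(o) read at
   line 9 cannot pass the test of line 10. *)
From Stdlib Require Import Arith PeanoNat Lia.

Set Implicit Arguments.

Lemma line_eq_dec (a b : line) : {a = b} + {a <> b}.
Proof. decide equality. Qed.

Section Steps.
Variables (OP RES Q : Type) (apply : OP -> Q -> Q * RES).
Notation config := (config OP RES Q).
Notation step := (step apply).

Lemma set_pc_self (c : config) p s : cpc (set_pc c p s) p = s.
Proof. cbn; now rewrite Nat.eqb_refl. Qed.

Lemma step_pc_other p q l (c c' : config) :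
  step p l c c' -> q <> p -> cpc c' q = cpc c q.
Proof.
  intros Hs Hq; inversion Hs; subst; cbn;
    destruct (Nat.eqb_spec q p); congruence.
Qed.

Lemma step_C_other p l (c c' : config) :
  step p l c c' -> l <> L2 -> cC c' = cC c.
Proof. intros Hs Hl; inversion Hs; subst; cbn; congruence. Qed.

Lemma writeP_time H ps ts (rs : rv RES) :
  derefH H ps = (ts, RNull RES) -> forall q, fst (writeP H ps (ts, rs) q) = fst (H q).
Proof.
  destruct ps as [|q0]; cbn; intros Hd q; auto.
  unfold updH; destruct (Nat.eqb_spec q q0) as [->|]; auto.
  now rewrite Hd.
Qed.

Lemma step_H_time_other p l (c c' : config) :
  step p l c c' -> l <> L3 -> forall q, fst (cH c' q) = fst (cH c q).
Proof.
  intros Hs Hl q; inversion Hs; subst; cbn; auto; try congruence.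
  destruct H0 as [[Hd ->]|[_ ->]]; auto.
  now apply writeP_time.
Qed.

Lemma step_At3_only_L2 p l (c c' : config) x t :
  step p l c c' -> cpc c' p = At3 RES Q x t -> l = L2.
Proof. intros Hs; inversion Hs; subst; rewrite set_pc_self; congruence. Qed.

Definition ticket_inv (c : config) : Prop :=
  (forall q, fst (cH c q) < cC c) /\
  (forall q x t, cpc c q = At3 RES Q x t -> fst (cH c q) < t < cC c).

Lemma ticket_inv_init s0 : ticket_inv (init OP RES s0).
Proof. split; cbn; [lia|discriminate]. Qed.

Lemma step_ticket_inv p l (c c' : config) :
  step p l c c' -> ticket_inv c -> ticket_inv c'.
Proof.
  intros Hs [Htime Hticket].
  destruct (line_eq_dec l L2) as [->|HnL2].
  { inversion Hs; subst; split; cbn.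
    - intros q; specialize (Htime q); lia.
    - intros q x t'; destruct (Nat.eqb_spec q p) as [->|Hqp].
      + intros [= <- <-]; specialize (Htime p); lia.
      + intros Hq; destruct (Hticket q x t' Hq); lia. }
  destruct (line_eq_dec l L3) as [->|HnL3].
  { inversion Hs; subst.
    destruct (Hticket p o t H) as [_ Ht]; split; cbn.
    - intros q; unfold updH; destruct (Nat.eqb q p); auto.
    - intros q x t'; unfold updH; destruct (Nat.eqb q p); [discriminate|apply Hticket]. }
  split; rewrite (step_C_other Hs HnL2).
  - intros q; rewrite (step_H_time_other Hs HnL3); auto.
  - intros q x t' Hq; rewrite (step_H_time_other Hs HnL3).
    destruct (Nat.eq_dec q p) as [->|Hqp].
    + now apply (step_At3_only_L2 Hs) in Hq.
    + rewrite (step_pc_other Hs Hqp) in Hq; now apply Hticket with x.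
Qed.

Definition settled q t (c : config) : Prop :=
  t <= fst (cH c q) /\ cH c q <> (t, RNull RES).

Lemma step_settled p l (c c' : config) q t :
  step p l c c' -> ticket_inv c -> settled q t c -> settled q t c'.
Proof.
  intros Hs [_ Hticket] [Hle Hne].
  inversion Hs; subst; unfold settled; cbn; try (split; assumption).
  - unfold updH; destruct (Nat.eqb_spec q p) as [->|]; [|now split].
    destruct (Hticket p o t0 H) as [Hlt _].
    split; cbn; [lia | intros [= Heq]; lia].
  - destruct H0 as [[Hd ->]|[_ ->]]; [|now split].
    destruct ps as [|q0]; cbn in *; [now split|].
    unfold updH; destruct (Nat.eqb_spec q q0) as [->|]; [|now split].
    rewrite Hd in Hle, Hne; cbn in Hle.
    split; cbn; [assumption | now intros [= -> _]].
Qed.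

Lemma step_L8_reads_A p (c c' : config) t1 o1 p1 :
  step p L8 c c' -> cA c = (t1, o1, p1) ->
  exists o t ts ss rs ps, cpc c' p = At9 o t ts ss rs ps t1 o1 p1.
Proof.
  intros Hs HA; inversion Hs; subst; rewrite HA in H0; injection H0 as -> -> ->.
  do 6 eexists; now rewrite set_pc_self.
Qed.

Lemma step_L9_reads_H p (c c' : config) o t ts ss rs ps t1 o1 p1 :
  step p L9 c c' -> cpc c p = At9 o t ts ss rs ps t1 o1 p1 ->
  exists th rh, derefH (cH c) p1 = (th, rh) /\
    cpc c' p = At10 o t ts ss rs ps t1 o1 p1 th rh.
Proof.
  intros Hs Hpc; inversion Hs; subst; rewrite Hpc in H; injection H as <- <- <- <- <- <- <- <- <-.
  exists th, rh; now rewrite set_pc_self.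
Qed.

Lemma step_L10T_test p (c c' : config) o t ts ss rs ps t1 o1 p1 th rh :
  step p L10T c c' -> cpc c p = At10 o t ts ss rs ps t1 o1 p1 th rh ->
  (th, rh) = (t1, RNull RES).
Proof.
  intros Hs Hpc; inversion Hs; subst; rewrite Hpc in H.
  now injection H as _ _ _ _ _ _ -> _ _ -> ->.
Qed.

Lemma hval_deref (cf : config) (o : operation OP) t1 o1 p1 :
  Aval o = (t1, o1, p1) -> derefH (cH cf) p1 = hval cf o.
Proof. destruct o; cbn; now intros [= _ _ <-]. Qed.

End Steps.

Section Execution.
Variables (OP RES Q : Type) (apply : OP -> Q -> Q * RES) (s0 : Q).
Variables (c : nat -> config OP RES Q) (sch : nat -> option (nat * line)).
Hypothesis exec : execution apply s0 c sch.

Lemma execution_preserves (P : config OP RES Q -> Prop) a b :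
  a <= b -> P (c a) ->
  (forall i p l, a <= i < b -> sch i = Some (p, l) ->
     step apply p l (c i) (c (S i)) -> P (c i) -> P (c (S i))) ->
  P (c b).
Proof.
  intros Hab Ha Hstep; induction Hab as [|b Hab IH]; [assumption|].
  assert (Hb : P (c b)) by (apply IH; intros i p l Hi; apply Hstep; lia).
  destruct exec as [_ Hsch]; specialize (Hsch b).
  destruct (sch b) as [[p l]|] eqn:Eb.
  - apply (Hstep b p l); auto; lia.
  - now rewrite Hsch.
Qed.

Lemma ticket_inv_always n : ticket_inv (c n).
Proof.
  apply (execution_preserves _ (a := 0)); [lia| |intros; eapply step_ticket_inv; eauto].
  destruct exec as [-> _]; apply ticket_inv_init.
Qed.

Lemma settled_persists q t a b :
  a <= b -> settled q t (c a) -> settled q t (c b).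
Proof.
  intros Hab Ha; apply (execution_preserves _ Hab Ha).
  intros i p l _ _ Hs; apply (step_settled Hs), ticket_inv_always.
Qed.

Lemma pc_frame p a b :
  a <= b -> (forall i l, a <= i < b -> sch i <> Some (p, l)) ->
  cpc (c b) p = cpc (c a) p.
Proof.
  intros Hab Hidle; apply (execution_preserves (fun cf => cpc cf p = cpc (c a) p) Hab); auto.
  intros i q l Hi Hsch Hs <-; apply (step_pc_other Hs).
  intros ->; now apply (Hidle i l Hi).
Qed.

Lemma step_at {i p l} : sch i = Some (p, l) -> step apply p l (c i) (c (S i)).
Proof. intros Hi; destruct exec as [_ Hsch]; specialize (Hsch i); now rewrite Hi in Hsch. Qed.

Lemma done_not_pending (o : operation OP) T n :
  done c o T -> T <= n -> hval (c n) o <> (top o, RNull RES).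
Proof.
  intros [T' [r [HT' [Hv Hr]]]] Hn.
  destruct o as [|q t x]; cbn in *; [discriminate|].
  assert (Hset : settled q t (c T')) by (split; rewrite Hv; cbn; [lia | now intros [= ->]]).
  apply (settled_persists (b := n)) in Hset as [_ ?]; [assumption | lia].
Qed.

End Execution.

Theorem mainTheorem9 (OP RES Q : Type) (delta : Q -> OP -> Q -> RES -> Prop)
  (s0 : Q) (apply : OP -> Q -> Q * RES)
  (apply_spec : forall x s, delta s x (fst (apply x s)) (snd (apply x s)))
  (c : nat -> config OP RES Q) (sch : nat -> option (nat * line))
  (o : operation OP) (p T T1 T2 : nat) (l : line) :
  execution apply s0 c sch ->
  is_operation c sch o ->
  sch T = Some (p, L8) ->
  cA (c T) = Aval o ->
  done c o T ->
  T < T1 -> T1 < T2 ->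
  sch T1 = Some (p, L9) ->
  sch T2 = Some (p, l) -> (l = L10T \/ l = L10F) ->
  (forall i l', T < i -> i < T2 -> i <> T1 -> sch i <> Some (p, l')) ->
  l = L10F.
Proof.
  intros Hexec _ HT HA Hdone HT1 HT2 Hs1 Hs2 [-> | ->] Hidle; [exfalso|reflexivity].
  destruct (Aval o) as [[t1 o1] p1] eqn:Ho.
  destruct (step_L8_reads_A (step_at Hexec HT) HA)
    as (o' & t & ts & ss & rs & ps & Hpc9).
  assert (Hframe9 : cpc (c T1) p = cpc (c (S T)) p)
    by (apply (pc_frame Hexec); [lia | intros i l' Hi; apply Hidle; lia]).
  rewrite Hpc9 in Hframe9.
  destruct (step_L9_reads_H (step_at Hexec Hs1) Hframe9) as (th & rh & Hread & Hpc10).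
  assert (Hframe10 : cpc (c T2) p = cpc (c (S T1)) p)
    by (apply (pc_frame Hexec); [lia | intros i l' Hi; apply Hidle; lia]).
  rewrite Hpc10 in Hframe10.
  pose proof (step_L10T_test (step_at Hexec Hs2) Hframe10) as Htest.
  rewrite Htest, (hval_deref (c T1) _ Ho) in Hread.
  assert (Ht1 : t1 = top o) by (destruct o; cbn in Ho; now injection Ho as <-).
  subst t1; apply (done_not_pending Hexec Hdone (n := T1)); [lia | assumption].
Qed.
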